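(* For every $\alpha\in\mathbb R$, the equation $2x-1=\tanh(\alpha x^2)$ has a unique solution $x\in(0,1)$. *)

From Stdlib Require Import Reals.

(** For [0 < x < 1] the equation [2x - 1 = tanh u] says exactly that
    [ln (x / (1 - x)) = 2u], so the solutions in [(0, 1)] are the points where
    [ln (x / (1 - x)) / x^2] takes the value [2 alpha].  This function is
    strictly increasing on [(0, 1)]: its derivative is
    [(1 / (1 - x) - 2 ln (x / (1 - x))) / x^3], positive because [2 ln t < t]
    for every [t > 0].  Hence there is at most one solution, and the
    intermediate value theorem applied to [2x - 1 - tanh (alpha x^2)], which is
    [-1] at [0] and [1 - tanh alpha > 0] at [1], gives one. *)

From Stdlib Require Import Reals Lra.
From Coquelicot Require Import Coquelicot.
Open Scope R_scope.

Lemma ln_le_sub1 t : 0 < t -> ln t <= t - 1.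
Proof.
  intros Ht.
  rewrite <- (ln_exp (t - 1)).
  apply ln_le; [exact Ht|].
  pose proof (exp_ineq1_le (t - 1)); lra.
Qed.

Lemma ln2_lt_1 : ln 2 < 1.
Proof.
  rewrite <- (ln_exp 1).
  apply ln_increasing; [lra|].
  pose proof (exp_ineq1 1 ltac:(lra)); lra.
Qed.

Lemma twice_ln_lt t : 0 < t -> 2 * ln t < t.
Proof.
  intros Ht.
  replace (2 * ln t) with (2 * (ln 2 + ln (t / 2))).
  - pose proof (ln_le_sub1 (t / 2) ltac:(lra)); pose proof ln2_lt_1; lra.
  - rewrite <- ln_mult by lra; do 2 f_equal; field.
Qed.

Lemma tanh_exp u : tanh u = (exp (2 * u) - 1) / (exp (2 * u) + 1).
Proof.
  unfold tanh, sinh, cosh.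
  rewrite exp_Ropp.
  replace (2 * u) with (u + u) by ring.
  rewrite exp_plus.
  pose proof (exp_pos u).
  field; nra.
Qed.

Lemma tanh_0 : tanh 0 = 0.
Proof. rewrite tanh_exp, Rmult_0_r, exp_0; field. Qed.

Lemma tanh_lt_1 u : tanh u < 1.
Proof.
  rewrite tanh_exp.
  pose proof (exp_pos (2 * u)).
  apply Rmult_lt_reg_r with (exp (2 * u) + 1); [lra|].
  field_simplify; lra.
Qed.

Lemma continuity_tanh : continuity tanh.
Proof.
  apply continuity_div.
  - exact (derivable_continuous _ derivable_sinh).
  - exact (derivable_continuous _ derivable_cosh).
  - intros u; unfold cosh; pose proof (exp_pos u); pose proof (exp_pos (- u)); lra.
Qed.

Definition logit (x : R) : R := ln (x / (1 - x)).

Lemma logit_of_tanh x u :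
  0 < x < 1 -> 2 * x - 1 = tanh u -> logit x = 2 * u.
Proof.
  intros Hx Hu.
  rewrite tanh_exp in Hu.
  pose proof (exp_pos (2 * u)).
  assert (Hexp : exp (2 * u) = x / (1 - x)).
  { apply Rmult_eq_reg_r with (1 - x); [|lra].
    assert ((2 * x - 1) * (exp (2 * u) + 1) = exp (2 * u) - 1)
      by (rewrite Hu; field; lra).
    field_simplify; [nra | lra]. }
  unfold logit; rewrite <- Hexp; apply ln_exp.
Qed.

Definition logit_div_sq (x : R) : R := logit x / x ^ 2.

Lemma derivable_pt_lim_logit_div_sq x : 0 < x < 1 ->
  derivable_pt_lim logit_div_sq x ((1 / (1 - x) - 2 * logit x) / x ^ 3).
Proof.
  intros Hx.
  apply is_derive_Reals; unfold logit_div_sq, logit.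
  auto_derive.
  - repeat split; try lra.
    + apply Rdiv_lt_0_compat; lra.
    + apply Rmult_integral_contrapositive; split; nra.
  - unfold Rdiv, Rminus; field; lra.
Qed.

Lemma logit_div_sq_deriv_pos x : 0 < x < 1 -> 0 < (1 / (1 - x) - 2 * logit x) / x ^ 3.
Proof.
  intros Hx.
  apply Rdiv_lt_0_compat; [|apply pow_lt; lra].
  pose proof (twice_ln_lt (x / (1 - x)) ltac:(apply Rdiv_lt_0_compat; lra)).
  assert (x / (1 - x) < 1 / (1 - x)).
  { apply Rmult_lt_compat_r; [apply Rinv_0_lt_compat|]; lra. }
  unfold logit; lra.
Qed.

Lemma logit_div_sq_increasing x y :
  0 < x -> x < y -> y < 1 -> logit_div_sq x < logit_div_sq y.
Proof.
  intros Hx Hxy Hy.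
  destruct (MVT_cor2 logit_div_sq
              (fun c => (1 / (1 - c) - 2 * logit c) / c ^ 3) x y Hxy)
    as [c [Hmvt Hc]].
  - intros c Hc; apply derivable_pt_lim_logit_div_sq; lra.
  - pose proof (logit_div_sq_deriv_pos c ltac:(lra)); nra.
Qed.

Lemma logit_div_sq_inj x y : 0 < x < 1 -> 0 < y < 1 ->
  logit_div_sq x = logit_div_sq y -> x = y.
Proof.
  intros Hx Hy Hxy.
  destruct (Rtotal_order x y) as [Hlt | [Heq | Hgt]]; [| exact Heq |].
  - pose proof (logit_div_sq_increasing x y ltac:(lra) Hlt ltac:(lra)); lra.
  - pose proof (logit_div_sq_increasing y x ltac:(lra) Hgt ltac:(lra)); lra.
Qed.

Lemma logit_div_sq_of_tanh alpha x : 0 < x < 1 ->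
  2 * x - 1 = tanh (alpha * x ^ 2) -> logit_div_sq x = 2 * alpha.
Proof.
  intros Hx Heq.
  unfold logit_div_sq; rewrite (logit_of_tanh x _ Hx Heq).
  field; lra.
Qed.

Lemma exists_2x_sub1_eq_tanh alpha :
  exists x, 0 < x < 1 /\ 2 * x - 1 = tanh (alpha * x ^ 2).
Proof.
  set (F := fun x => 2 * x - 1 - tanh (alpha * x ^ 2)).
  assert (F_cont : continuity F).
  { intros x; unfold F.
    apply continuity_pt_minus; [reg|].
    apply (continuity_pt_comp (fun x => alpha * x ^ 2) tanh); [reg|].
    apply continuity_tanh. }
  assert (F0 : F 0 < 0)
    by (unfold F; replace (alpha * 0 ^ 2) with 0 by ring; rewrite tanh_0; lra).
  assert (F1 : 0 < F 1)
    by (unfold F; pose proof (tanh_lt_1 (alpha * 1 ^ 2)); lra).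
  destruct (IVT F 0 1 F_cont ltac:(lra) F0 F1) as [z [Hz Fz]].
  exists z; split.
  - split; apply Rnot_le_lt; intros ?;
      [assert (z = 0) | assert (z = 1)]; subst; lra.
  - unfold F in Fz; lra.
Qed.

Theorem lemma33 (alpha : R) :
  exists! x : R, 0 < x < 1 /\ 2 * x - 1 = tanh (alpha * x ^ 2).
Proof.
  destruct (exists_2x_sub1_eq_tanh alpha) as [z [Hz Ez]].
  exists z; split; [split; assumption|].
  intros y [Hy Ey].
  apply logit_div_sq_inj; [exact Hz | exact Hy|].
  rewrite (logit_div_sq_of_tanh alpha z Hz Ez).
  now rewrite (logit_div_sq_of_tanh alpha y Hy Ey).
Qed.
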